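(* Let $c$ be a constant. For unknowns $\vec S_n(t),\bar{\vec S}_n(t)\in\mathbb{C}^m$ and $v_n(t)\in\mathbb{C}$ ($n\in\mathbb{Z}$), consider the discrete multicomponent Yajima--Oikawa system \begin{align*} \mathrm{i}\,\vec S_{n,t}&=v_n(\vec S_{n+1}+\vec S_{n-1})-c\,\vec S_n,\\ \mathrm{i}\,\bar{\vec S}_{n,t}&=-v_n(\bar{\vec S}_{n+1}+\bar{\vec S}_{n-1})+c\,\bar{\vec S}_n,\\ v_{n,t}&=\tfrac12 v_n\,\Delta_n^+\big(\langle\vec S_n,\bar{\vec S}_{n-1}\rangle+\langle\vec S_{n-1},\bar{\vec S}_n\rangle\big). \end{align*} Consider the linear problem for a scalar $\psi_n$ and column vectors $\vec\phi_n,\vec\chi_n\in\mathbb{C}^m$ with constant spectral parameter $\lambda$: \begin{align*} v_n(\psi_{n+1}+\psi_{n-1})&=\lambda\psi_n-\langle\vec S_n,\vec\phi_n\rangle-\langle\vec\chi_n,\bar{\vec S}_n\rangle,\\ \vec\phi_{n+1}-\vec\phi_n&=\tfrac{\mathrm{i}}{2}\bar{\vec S}_n(\psi_{n+1}+\psi_{n-1}),\\ \vec\chi_{n+1}+\vec\chi_n&=\tfrac{\mathrm{i}}{2}\vec S_n(\psi_{n+1}+\psi_{n-1}), \end{align*} together with the time evolution \begin{align*} \mathrm{i}\,\psi_{n,t}&=v_n(\psi_{n+1}+\psi_{n-1})-c\,\psi_n,\\ \vec\phi_{n,t}&=\tfrac12 v_n\bar{\vec S}_{n-1}(\psi_{n+1}+\psi_{n-1})-\tfrac12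 v_{n-1}\bar{\vec S}_n(\psi_n+\psi_{n-2}),\\ \vec\chi_{n,t}&=\tfrac12 v_n\vec S_{n-1}(\psi_{n+1}+\psi_{n-1})+\tfrac12 v_{n-1}\vec S_n(\psi_n+\psi_{n-2})+2\mathrm{i}c\,\vec\chi_n. \end{align*} Then the compatibility condition of these overdetermined linear equations (i.e., the requirement that the $t$-derivatives of the three spatial equations, computed using the time-evolution equations and the first spatial equation to eliminate the time derivatives and $\lambda$, hold identically for arbitrary values of $\psi_n,\vec\phi_n,\vec\chi_n$) is equivalent to the discrete multicomponent Yajima--Oikawa system above.
   Context: Here $n\in\mathbb{Z}$ is the lattice site and $t$ is time; subscript $t$ denotes $\partial/\partial t$. $\langle\vec a,\vec b\rangle=\sum_{i=1}^m a^{(i)}b^{(i)}$ is the standard bilinear scalar product (no complex conjugation). $\Delta_n^+$ is the forward difference operator, $\Delta_n^+f_n:=f_{n+1}-f_n$. The product of a scalar and a column vector is written in either order. $\bar{\vec S}_n$ is an independent vector variable (not necessarily related to the complex conjugate of $\vec S_n$). *)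

(* Complex numbers are modelled by an arbitrary
   numClosedFieldType C (e.g. algC); 'i is its imaginary unit. *)
From HB Require Import structures.
From mathcomp Require Import all_boot all_order all_algebra.
Set Implicit Arguments. Unset Strict Implicit. Unset Printing Implicit Defensive.
Import Order.TTheory GRing.Theory Num.Theory.
Local Open Scope ring_scope.

(* standard bilinear scalar product <a,b> = sum_i a_i b_i (no conjugation) *)
Definition bil (C : numClosedFieldType) (m : nat) (a b : 'cV[C]_m) : C :=
  \sum_(i < m) a i 0 * b i 0.

Definition fdiff (C : numClosedFieldType) (f : int -> C) (n : int) : C :=
  f (n + 1) - f n.

Definition nsum (C : numClosedFieldType) (psi : int -> C) (n : int) : C :=
  psi (n + 1) + psi (n - 1).

(* The discrete multicomponent Yajima--Oikawa system, at one instant t.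
   S, Sb, v are the values of S_n(t), \bar S_n(t), v_n(t);
   dS, dSb, dv are the values of their t-derivatives. *)
Definition YO_system (C : numClosedFieldType) (m : nat) (c : C)
  (S Sb : int -> 'cV[C]_m) (v : int -> C)
  (dS dSb : int -> 'cV[C]_m) (dv : int -> C) : Prop :=
  forall n : int,
    [/\ 'i *: dS n = v n *: (S (n + 1) + S (n - 1)) - c *: S n,
        'i *: dSb n = - (v n *: (Sb (n + 1) + Sb (n - 1))) + c *: Sb n
      & dv n = 2^-1 * v n *
               fdiff (fun k => bil (S k) (Sb (k - 1)) + bil (S (k - 1)) (Sb k)) n].

(* Compatibility condition of the linear problem.
   psi, phi, chi : values of psi_n(t), phi_n(t), chi_n(t); dpsi, dphi, dchi:
   their t-derivatives, given by the time-evolution equations.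
   The second and third spatial equations are imposed (psi arbitrary, and
   then phi_n, chi_n arbitrary at any site).  The first spatial equation is
   used to eliminate lambda: it says lambda psi_k = Lam k below, so the only
   lambda-dependent term lambda psi_{n,t} of the differentiated first
   equation, which by the evolution of psi equals
   -i (v_n (lambda psi_{n+1} + lambda psi_{n-1}) - c lambda psi_n),
   is replaced by  -i (v_n (Lam (n+1) + Lam (n-1)) - c Lam n). *)
Definition lax_compatible (C : numClosedFieldType) (m : nat) (c : C)
  (S Sb : int -> 'cV[C]_m) (v : int -> C)
  (dS dSb : int -> 'cV[C]_m) (dv : int -> C) : Prop :=
  forall (psi dpsi : int -> C) (phi chi dphi dchi : int -> 'cV[C]_m),
    (forall n : int, phi (n + 1) - phi n = ('i / 2 * nsum psi n) *: Sb n) ->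
    (forall n : int, chi (n + 1) + chi n = ('i / 2 * nsum psi n) *: S n) ->
    (forall n : int, 'i * dpsi n = v n * nsum psi n - c * psi n) ->
    (forall n : int, dphi n = (2^-1 * v n * nsum psi n) *: Sb (n - 1)
                             - (2^-1 * v (n - 1) * (psi n + psi (n - 2))) *: Sb n) ->
    (forall n : int, dchi n = (2^-1 * v n * nsum psi n) *: S (n - 1)
                             + (2^-1 * v (n - 1) * (psi n + psi (n - 2))) *: S n
                             + (2 * 'i * c) *: chi n) ->
    let Lam := fun k : int => v k * nsum psi k + bil (S k) (phi k) + bil (chi k) (Sb k) in
    forall n : int,
      [/\ (* d/dt of  v_n (psi_{n+1}+psi_{n-1}) = lambda psi_n - <S_n,phi_n> - <chi_n,Sb_n> *)
          dv n * nsum psi n + v n * (dpsi (n + 1) + dpsi (n - 1))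
            = - 'i * (v n * (Lam (n + 1) + Lam (n - 1)) - c * Lam n)
              - (bil (dS n) (phi n) + bil (S n) (dphi n))
              - (bil (dchi n) (Sb n) + bil (chi n) (dSb n)),
          (* d/dt of  phi_{n+1} - phi_n = (i/2) Sb_n (psi_{n+1}+psi_{n-1}) *)
          dphi (n + 1) - dphi n
            = ('i / 2 * nsum dpsi n) *: Sb n + ('i / 2 * nsum psi n) *: dSb n
        & (* d/dt of  chi_{n+1} + chi_n = (i/2) S_n (psi_{n+1}+psi_{n-1}) *)
          dchi (n + 1) + dchi n
            = ('i / 2 * nsum dpsi n) *: S n + ('i / 2 * nsum psi n) *: dS n].

(* Eliminate the shifted values phi_{n+-1}, chi_{n+-1} by the spatial
   recurrences and all time derivatives by the evolution equations.  Then the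
   defect (left- minus right-hand side) of the differentiated phi- (resp. chi-)
   equation is -(psi_{n+1}+psi_{n-1})/2 times the defect of the Sb- (resp. S-)
   equation of the Yajima--Oikawa system, and the defect of the differentiated
   psi-equation is (psi_{n+1}+psi_{n-1}) times the defect of the v-equation
   plus terms bilinear in the two other defects.  So the system implies
   compatibility; conversely, compatibility for psi = 1, with phi and chi
   obtained by solving their recurrences, forces all defects to vanish. *)
From HB Require Import structures.
From mathcomp Require Import all_boot all_order all_algebra.
From mathcomp Require Import ring.
Set Implicit Arguments. Unset Strict Implicit. Unset Printing Implicit Defensive.
Import Order.TTheory GRing.Theory Num.Theory.
Local Open Scope ring_scope.

Section Bilinear.
Variables (C : numClosedFieldType) (m : nat).
Implicit Types (x y z : 'cV[C]_m) (a : C).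

Lemma bilDl x y z : bil (x + y) z = bil x z + bil y z.
Proof. by rewrite /bil -big_split; apply: eq_bigr => i _; rewrite mxE mulrDl. Qed.

Lemma bilDr x y z : bil z (x + y) = bil z x + bil z y.
Proof. by rewrite /bil -big_split; apply: eq_bigr => i _; rewrite mxE mulrDr. Qed.

Lemma bilZl a x z : bil (a *: x) z = a * bil x z.
Proof. by rewrite /bil mulr_sumr; apply: eq_bigr => i _; rewrite mxE mulrA. Qed.

Lemma bilZr a x z : bil z (a *: x) = a * bil z x.
Proof. by rewrite /bil mulr_sumr; apply: eq_bigr => i _; rewrite mxE mulrCA. Qed.

Lemma bilNl x z : bil (- x) z = - bil x z.
Proof. by rewrite -scaleN1r bilZl mulN1r. Qed.

Lemma bilNr x z : bil z (- x) = - bil z x.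
Proof. by rewrite -scaleN1r bilZr mulN1r. Qed.

Lemma bil0l z : bil 0 z = 0.
Proof. by rewrite -(scale0r (0 : 'cV[C]_m)) bilZl mul0r. Qed.

Lemma bil0r z : bil z 0 = 0.
Proof. by rewrite -(scale0r (0 : 'cV[C]_m)) bilZr mul0r. Qed.

End Bilinear.

Lemma int_recursion (T : Type) (x0 : T) (step unstep : int -> T -> T) :
  (forall k, cancel (unstep k) (step k)) ->
  exists f : int -> T, forall k, f (k + 1) = step k (f k).
Proof.
move=> stepK.
exists (fun k => match k with
                 | Posz n => iteri n (fun j => step j) x0
                 | Negz n => iteri n.+1 (fun j => unstep (Negz j)) x0
                 end).
case=> [n|[|n]].
- by rewrite -[1]/(Posz 1) -PoszD addn1.
- by rewrite /= stepK.
- have -> : Negz n.+1 + 1 = Negz n by rewrite !NegzE addrC -opprB -addn1 PoszD addrK.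
  by rewrite /= stepK.
Qed.

Section FirstOrderRecurrences.
Variable V : zmodType.

Lemma difference_equation_solvable (a : int -> V) :
  exists f : int -> V, forall n, f (n + 1) - f n = a n.
Proof.
have [f fE] := int_recursion 0 (fun n => subrK (a n)).
by exists f => n; rewrite fE addrAC subrr add0r.
Qed.

Lemma sum_equation_solvable (b : int -> V) :
  exists f : int -> V, forall n, f (n + 1) + f n = b n.
Proof.
have stepK n : cancel (fun x => - x + b n) (fun x => - x + b n).
  by move=> x; rewrite opprD opprK subrK.
have [f fE] := int_recursion 0 stepK.
by exists f => n; rewrite fE addrAC addNr add0r.
Qed.

End FirstOrderRecurrences.

Section LaxPair.
Variables (C : numClosedFieldType) (m : nat) (c : C).
Variables (S Sb : int -> 'cV[C]_m) (v : int -> C).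
Variables (dS dSb : int -> 'cV[C]_m) (dv : int -> C).

Definition yo_defectS (n : int) := 'i *: dS n - (v n *: (S (n + 1) + S (n - 1)) - c *: S n).

Definition yo_defectSb (n : int) :=
  'i *: dSb n - (- (v n *: (Sb (n + 1) + Sb (n - 1))) + c *: Sb n).

Definition yo_defectv (n : int) :=
  dv n - 2^-1 * v n * fdiff (fun k => bil (S k) (Sb (k - 1)) + bil (S (k - 1)) (Sb k)) n.

Lemma YO_systemE : YO_system c S Sb v dS dSb dv <->
  forall n : int, [/\ yo_defectS n = 0, yo_defectSb n = 0 & yo_defectv n = 0].
Proof.
split=> H n; have [eS eSb ev] := H n.
  by split; apply/eqP; rewrite subr_eq0; apply/eqP.
by split; apply/eqP; rewrite -subr_eq0; apply/eqP.
Qed.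

Variables (psi dpsi : int -> C) (phi chi dphi dchi : int -> 'cV[C]_m).
Hypothesis phiD : forall n : int, phi (n + 1) - phi n = ('i / 2 * nsum psi n) *: Sb n.
Hypothesis chiD : forall n : int, chi (n + 1) + chi n = ('i / 2 * nsum psi n) *: S n.
Hypothesis dpsiE : forall n : int, 'i * dpsi n = v n * nsum psi n - c * psi n.
Hypothesis dphiE : forall n : int, dphi n = (2^-1 * v n * nsum psi n) *: Sb (n - 1)
                                  - (2^-1 * v (n - 1) * (psi n + psi (n - 2))) *: Sb n.
Hypothesis dchiE : forall n : int, dchi n = (2^-1 * v n * nsum psi n) *: S (n - 1)
                                  + (2^-1 * v (n - 1) * (psi n + psi (n - 2))) *: S n
                                  + (2 * 'i * c) *: chi n.

(* [lax_lambda k] is lambda psi_k, as given by the first spatial equation. *)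
Definition lax_lambda (k : int) :=
  v k * nsum psi k + bil (S k) (phi k) + bil (chi k) (Sb k).

Definition lax_equations (n : int) :=
  [/\ dv n * nsum psi n + v n * (dpsi (n + 1) + dpsi (n - 1))
        = - 'i * (v n * (lax_lambda (n + 1) + lax_lambda (n - 1)) - c * lax_lambda n)
          - (bil (dS n) (phi n) + bil (S n) (dphi n))
          - (bil (dchi n) (Sb n) + bil (chi n) (dSb n)),
      dphi (n + 1) - dphi n
        = ('i / 2 * nsum dpsi n) *: Sb n + ('i / 2 * nsum psi n) *: dSb n
    & dchi (n + 1) + dchi n
        = ('i / 2 * nsum dpsi n) *: S n + ('i / 2 * nsum psi n) *: dS n].

Let i_neq0 : ('i : C) != 0 := neq0Ci C.
Let two_neq0 : (2 : C) != 0. Proof. by rewrite pnatr_eq0. Qed.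

(* With 'i written as -'i^-1, every identity below is a rational identity that
   [field] checks without knowing 'i^2 = -1. *)
Let dpsi_inv (n : int) : dpsi n = 'i^-1 * (v n * nsum psi n - c * psi n).
Proof. by rewrite -dpsiE mulKf. Qed.

Let dchi_inv (n : int) : dchi n = (2^-1 * v n * nsum psi n) *: S (n - 1)
                            + (2^-1 * v (n - 1) * (psi n + psi (n - 2))) *: S n
                            - (2 * c / 'i) *: chi n.
Proof. by rewrite dchiE invCi mulrN scaleNr opprK [2 * c * _]mulrAC. Qed.

Let phi_succ (n : int) : phi (n + 1) = phi n + ('i / 2 * nsum psi n) *: Sb n.
Proof. by rewrite -phiD [phi n + _]addrC subrK. Qed.

Let phi_pred (n : int) : phi (n - 1) = phi n - ('i / 2 * nsum psi (n - 1)) *: Sb (n - 1).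
Proof.
by have := phiD (n - 1); rewrite subrK => <-; rewrite opprB [phi n + _]addrC subrK.
Qed.

Let chi_succ (n : int) : chi (n + 1) = - chi n + ('i / 2 * nsum psi n) *: S n.
Proof. by rewrite -chiD [- chi n + _]addrC addrK. Qed.

Let chi_pred (n : int) : chi (n - 1) = - chi n + ('i / 2 * nsum psi (n - 1)) *: S (n - 1).
Proof. by have := chiD (n - 1); rewrite subrK => <-; rewrite addKr. Qed.

Let shifts (n : int) :
  [/\ n + 1 + 1 = n + 2, n + 1 - 1 = n, n - 1 + 1 = n, n - 1 - 1 = n - 2
    & n + 1 - 2 = n - 1].
Proof. by split; ring. Qed.

Lemma phi_equation_defect (n : int) :
  dphi (n + 1) - dphi n - (('i / 2 * nsum dpsi n) *: Sb n + ('i / 2 * nsum psi n) *: dSb n)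
  = - (nsum psi n / 2) *: yo_defectSb n.
Proof.
have [e1 e2 e3 e4 e5] := shifts n.
rewrite /yo_defectSb !dphiE /nsum !dpsi_inv /nsum e1 e2 e3 e4 e5.
by apply/matrixP => a b; rewrite !mxE; field.
Qed.

Lemma chi_equation_defect (n : int) :
  dchi (n + 1) + dchi n - (('i / 2 * nsum dpsi n) *: S n + ('i / 2 * nsum psi n) *: dS n)
  = - (nsum psi n / 2) *: yo_defectS n.
Proof.
have [e1 e2 e3 e4 e5] := shifts n.
rewrite /yo_defectS !dchi_inv chi_succ /nsum !dpsi_inv /nsum e1 e2 e3 e4 e5.
by apply/matrixP => a b; rewrite !mxE; field.
Qed.

Lemma psi_equation_defect (n : int) :
  dv n * nsum psi n + v n * (dpsi (n + 1) + dpsi (n - 1))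
  - (- 'i * (v n * (lax_lambda (n + 1) + lax_lambda (n - 1)) - c * lax_lambda n)
     - (bil (dS n) (phi n) + bil (S n) (dphi n))
     - (bil (dchi n) (Sb n) + bil (chi n) (dSb n)))
  = nsum psi n * yo_defectv n
    + 'i^-1 * bil (yo_defectS n) (phi n) + 'i^-1 * bil (chi n) (yo_defectSb n).
Proof.
have [e1 e2 e3 e4 e5] := shifts n.
rewrite -invCi /lax_lambda /yo_defectS /yo_defectSb /yo_defectv.
rewrite dchi_inv dphiE !dpsi_inv phi_succ phi_pred chi_succ chi_pred.
rewrite !(bilDl, bilDr, bilNl, bilNr, bilZl, bilZr) /nsum /fdiff e1 e2 e3 e4.
by field.
Qed.

Lemma lax_equations_of_YO :
  YO_system c S Sb v dS dSb dv -> forall n : int, lax_equations n.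
Proof.
move=> /YO_systemE YO n; have [eS eSb ev] := YO n.
split; apply: subr0_eq.
- by rewrite psi_equation_defect eS eSb ev bil0l bil0r !mulr0 !addr0.
- by rewrite phi_equation_defect eSb scaler0.
- by rewrite chi_equation_defect eS scaler0.
Qed.

Lemma YO_of_lax_equations :
  (forall n : int, nsum psi n != 0) -> (forall n : int, lax_equations n) ->
  YO_system c S Sb v dS dSb dv.
Proof.
move=> psi_neq0 lax; apply/YO_systemE => n; have [ePsi ePhi eChi] := lax n.
have half_neq0 : - (nsum psi n / 2) != 0.
  by rewrite oppr_eq0 mulf_neq0 ?invr_eq0.
have eS : yo_defectS n = 0.
  have := chi_equation_defect n; rewrite eChi subrr => /esym/eqP.
  by rewrite scaler_eq0 (negbTE half_neq0) => /eqP.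
have eSb : yo_defectSb n = 0.
  have := phi_equation_defect n; rewrite ePhi subrr => /esym/eqP.
  by rewrite scaler_eq0 (negbTE half_neq0) => /eqP.
split=> //; have := psi_equation_defect n.
rewrite ePsi subrr eS eSb bil0l bil0r !mulr0 !addr0 => /esym/eqP.
by rewrite mulf_eq0 (negbTE (psi_neq0 n)) => /eqP.
Qed.

End LaxPair.

Theorem proposition2p1 (C : numClosedFieldType) (m : nat) (c : C)
  (S Sb : int -> 'cV[C]_m) (v : int -> C)
  (dS dSb : int -> 'cV[C]_m) (dv : int -> C) :
  lax_compatible c S Sb v dS dSb dv <-> YO_system c S Sb v dS dSb dv.
Proof.
split; last first.
  move=> YO psi dpsi phi chi dphi dchi phiD chiD dpsiE dphiE dchiE.
  exact: (lax_equations_of_YO phiD chiD dpsiE dphiE dchiE YO).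
move=> lax; pose psi (k : int) : C := 1.
have [phi phiD] := difference_equation_solvable (fun k => ('i / 2 * nsum psi k) *: Sb k).
have [chi chiD] := sum_equation_solvable (fun k => ('i / 2 * nsum psi k) *: S k).
pose dpsi k := 'i^-1 * (v k * nsum psi k - c * psi k).
have dpsiE k : 'i * dpsi k = v k * nsum psi k - c * psi k by rewrite /dpsi mulVKf ?neq0Ci.
pose dphi k := (2^-1 * v k * nsum psi k) *: Sb (k - 1)
               - (2^-1 * v (k - 1) * (psi k + psi (k - 2))) *: Sb k.
pose dchi k := (2^-1 * v k * nsum psi k) *: S (k - 1)
               + (2^-1 * v (k - 1) * (psi k + psi (k - 2))) *: S k + (2 * 'i * c) *: chi k.
have dphiE k : dphi k = _ := erefl; have dchiE k : dchi k = _ := erefl.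
apply: (YO_of_lax_equations phiD chiD dpsiE dphiE dchiE) => [n|].
  by rewrite /nsum /psi -mulr2n pnatr_eq0.
exact: lax phiD chiD dpsiE dphiE dchiE.
Qed.
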